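(* Over profiles whose ballots are strict weak orders (ties allowed), let $f$ be a VCCR satisfying Anonymity, Neutrality, Availability, Neutral Indifference, Monotonicity for two-candidate profiles (in particular, if it satisfies Monotonicity), Neutral Reversal, and Coherent IIA. Then $sc(\mathbf P)\supseteq f(\mathbf P)$ for every profile $\mathbf P$.
   Context: Profiles: $\mathbf P:V\to\mathcal W(X)$, $V$ nonempty finite set of voters, $X=X(\mathbf P)$ nonempty finite set of candidates (from fixed infinite sets), $\mathcal W(X)$ the strict weak orders on $X$ (irreflexive, transitive, negatively transitive; the empty relation, all tied, is allowed). ''Ranks $x$ above $y$'' means strictly. $\mathbf P_{|Y}$ restricts ballots to $Y$. $\mathrm{Margin}_{\mathbf P}(x,y)$ = #voters with $x$ strictly above $y$ minus #voters with $y$ strictly above $x$. $\mathcal M(\mathbf P)$: edges $x\to y$ weighted $\mathrm{Margin}_{\mathbf P}(x,y)$ when positive. Majority paths and strength (minimum consecutive margin) as usual. VCCR: $f(\mathbf P)$ asymmetric relation on $X(\mathbf P)$. $(x,y)\in sc(\mathbf P)$ iff $\mathrm{Margin}_{\mathbf P}(x,y)>0$ exceeds the strength of every majority path from $y$ to $x$. Moving up one place: for strict weak order $\succ$ on finite $X$ and $x$ not greatest, let $x'\ne x$ be $\succ$-minimal with $x\not\succ x'$; $\succ'$ results from moving $x$ up one place if it agrees with $\succ$ off $x$, and: if $x$ is tied with $x'$ in $\succ$ then in $\succ'$ $x$ is tied with nothing, $x\succ'x'$, and $y\succ x$ implies $y\succ'x$; if $x$ is tied with nothing in $\succ$, then $x$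 is tied with $x'$ in $\succ'$. Axioms: Anonymity (permuting which voter has which ballot, same voter set, leaves $f$ unchanged); Neutrality (if a bijection $\pi$ of candidates transforms $\mathbf P$ into $\mathbf P'$ ballot-wise, same voters and candidates, then $(x,y)\in f(\mathbf P)\iff(\pi x,\pi y)\in f(\mathbf P')$); Availability (some candidate is undefeated in every profile); Neutral Indifference (adding a voter with empty ballot leaves $f$ unchanged); Monotonicity (resp. for two-candidate profiles): moving $x$ up one place in one ballot of a (resp. two-candidate) profile preserves $(x,y)\in f(\cdot)$; Neutral Reversal (adding two voters with converse ballots leaves $f$ unchanged); Coherent IIA: with $\mathbf P\rightsquigarrow_{x,y}\mathbf P'$ meaning $\mathbf P_{|\{x,y\}}=\mathbf P'_{|\{x,y\}}$ and $\mathcal M(\mathbf P')$ obtainable from $\mathcal M(\mathbf P)$ by deleting zero or more candidates other than $x,y$ and deleting or reducing weights of zero or more edges not connecting $x,y$, $(x,y)\in f(\mathbf P)$ and $\mathbf P\rightsquigarrow_{x,y}\mathbf P'$ imply $(x,y)\in f(\mathbf P')$. *)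

From HB Require Import structures.
From mathcomp Require Import all_boot all_order all_algebra.
From mathcomp Require Import finmap.

Set Implicit Arguments.
Unset Strict Implicit.
Unset Printing Implicit Defensive.

Import Order.TTheory GRing.Theory Num.Theory.
Local Open Scope fset_scope.

Section Voting.
Variables (VT XT : choiceType).

(* Well-formedness (wf_profile) requires ballots to vanish outside the
   voter/candidate sets, so a profile is determined by its mathematical
   content. *)
Record profile := Profile {
  voters : {fset VT};
  cands  : {fset XT};
  ballot : VT -> XT -> XT -> bool  (* ballot v a b : v ranks a strictly above b *)
}.

Definition strict_weak_order (X : {fset XT}) (r : XT -> XT -> bool) : Prop :=
  [/\ (forall a, a \in X -> ~~ r a a),
      (forall a b c, a \in X -> b \in X -> c \in X -> r a b -> r b c -> r a c)
    & (forall a b c, a \in X -> b \in X -> c \in X ->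
         ~~ r a b -> ~~ r b c -> ~~ r a c)].

Definition wf_profile (P : profile) : Prop :=
  [/\ voters P != fset0,
      cands P != fset0,
      (forall v a b, ballot P v a b ->
         [/\ v \in voters P, a \in cands P & b \in cands P])
    & (forall v, v \in voters P -> strict_weak_order (cands P) (ballot P v))].

Definition margin (P : profile) (a b : XT) : int :=
  ((count (fun v => ballot P v a b) (voters P))%:Z
   - (count (fun v => ballot P v b a) (voters P))%:Z)%R.

(* a majority path a = a0, a1, ..., an = b (the list s = [a1; ...; an]),
   of distinct candidates, each with a positive margin over the next *)
Definition majority_path (P : profile) (a : XT) (s : seq XT) (b : XT) : Prop :=
  [/\ s != [::], last a s = b, uniq (a :: s)
    & path (fun u w => (0 < margin P u w)%R) a s].

Fixpoint strength (P : profile) (a : XT) (s : seq XT) : int :=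
  match s with
  | [::] => 0%R
  | b :: s' =>
      match s' with
      | [::] => margin P a b
      | _ :: _ => Num.min (margin P a b) (strength P b s')
      end
  end.

Definition sc (P : profile) (x y : XT) : Prop :=
  (0 < margin P x y)%R /\
  forall s, majority_path P y s x -> (strength P y s < margin P x y)%R.

(* ---- VCCR and axioms; f P x y means (x, y) \in f(P) ---- *)
Definition vccr := profile -> XT -> XT -> Prop.

Definition is_vccr (f : vccr) : Prop :=
  forall P, wf_profile P -> forall x y, f P x y ->
    [/\ x \in cands P, y \in cands P & ~ f P y x].

Definition anonymity (f : vccr) : Prop :=
  forall (P P' : profile) (sigma : VT -> VT),
    wf_profile P -> wf_profile P' ->
    voters P' = voters P -> cands P' = cands P ->
    (forall v, v \in voters P -> sigma v \in voters P) ->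
    {in voters P &, injective sigma} ->
    (forall v, v \in voters P -> ballot P' v =2 ballot P (sigma v)) ->
    forall x y, f P' x y <-> f P x y.

Definition neutrality (f : vccr) : Prop :=
  forall (P P' : profile) (pi : XT -> XT),
    wf_profile P -> wf_profile P' ->
    voters P' = voters P -> cands P' = cands P ->
    (forall a, a \in cands P -> pi a \in cands P) ->
    {in cands P &, injective pi} ->
    (forall v a b, v \in voters P -> a \in cands P -> b \in cands P ->
       ballot P' v (pi a) (pi b) = ballot P v a b) ->
    forall x y, x \in cands P -> y \in cands P ->
      (f P x y <-> f P' (pi x) (pi y)).

Definition availability (f : vccr) : Prop :=
  forall P, wf_profile P -> exists2 x, x \in cands P & forall y, ~ f P y x.

Definition neutral_indifference (f : vccr) : Prop :=
  forall (P P' : profile) (v : VT),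
    wf_profile P -> wf_profile P' ->
    v \notin voters P -> voters P' = v |` voters P -> cands P' = cands P ->
    (forall u, u \in voters P -> ballot P' u =2 ballot P u) ->
    (forall a b, ballot P' v a b = false) ->
    forall x y, f P' x y <-> f P x y.

Definition neutral_reversal (f : vccr) : Prop :=
  forall (P P' : profile) (v1 v2 : VT),
    wf_profile P -> wf_profile P' ->
    v1 != v2 -> v1 \notin voters P -> v2 \notin voters P ->
    voters P' = v1 |` (v2 |` voters P) -> cands P' = cands P ->
    (forall u, u \in voters P -> ballot P' u =2 ballot P u) ->
    (forall a b, ballot P' v2 a b = ballot P' v1 b a) ->
    forall x y, f P' x y <-> f P x y.

Definition tied (r : XT -> XT -> bool) (a b : XT) : bool := ~~ r a b && ~~ r b a.

(* r' results from r (strict weak orders on X) by moving x up one place *)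
Definition moved_up (X : {fset XT}) (r r' : XT -> XT -> bool) (x : XT) : Prop :=
  [/\ x \in X,
      (exists2 z, z \in X & r z x),
      (forall a b, a \in X -> b \in X -> a != x -> b != x -> r' a b = r a b)
    & exists x',
      [/\ [/\ x' \in X, x' != x & ~~ r x x'],
          (forall z, z \in X -> z != x -> ~~ r x z -> ~~ r x' z) ,
          (tied r x x' ->
             [/\ (forall z, z \in X -> z != x -> ~~ tied r' x z),
                 r' x x'
               & (forall y, y \in X -> r y x -> r' y x)])
        & ((forall z, z \in X -> z != x -> ~~ tied r x z) -> tied r' x x')]].

Definition monotonicity_two (f : vccr) : Prop :=
  forall (P P' : profile) (v : VT) (x y : XT),
    wf_profile P -> wf_profile P' -> #|` cands P| = 2 ->
    voters P' = voters P -> cands P' = cands P ->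
    v \in voters P ->
    (forall u, u \in voters P -> u != v -> ballot P' u =2 ballot P u) ->
    moved_up (cands P) (ballot P v) (ballot P' v) x ->
    f P x y -> f P' x y.

Definition same_restriction (P P' : profile) (Y : {fset XT}) : Prop :=
  [/\ voters P' = voters P,
      cands P' `&` Y = cands P `&` Y
    & forall v a b, v \in voters P -> a \in cands P `&` Y -> b \in cands P `&` Y ->
        ballot P' v a b = ballot P v a b].

(* M(P') obtained from M(P) by deleting candidates other than x, y and
   deleting / reducing the weights of edges not connecting x and y *)
Definition graph_reduct (P P' : profile) (x y : XT) : Prop :=
  [/\ cands P' `<=` cands P, x \in cands P', y \in cands P',
      margin P' x y = margin P x y
    & forall a b, a \in cands P' -> b \in cands P' -> (0 < margin P' a b)%R ->
        (margin P' a b <= margin P a b)%R].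

Definition coherent_iia (f : vccr) : Prop :=
  forall (P P' : profile) (x y : XT),
    wf_profile P -> wf_profile P' -> f P x y ->
    same_restriction P P' [fset x; y] -> graph_reduct P P' x y ->
    f P' x y.

End Voting.

(* A defeat of y by x has positive margin: restrict the profile to {x, y}
   (Coherent IIA), raise x in ballots preferring y until the margin is 0
   (Monotonicity), and then swapping x and y (Neutrality, Anonymity) would
   make y defeat x as well.
   If some majority path y -> ... -> x had strength at least m = margin(x, y),
   the cycle it closes with the edge x -> y could be rebuilt as a profile T
   whose majority graph is exactly that cycle, every edge having margin m.
   After padding the original profile with pairs of reversed ballots and with
   blank ballots, its restriction to {x, y} matches, up to a permutation of
   the voters, the restriction of T to any edge of the cycle; Coherent IIA and
   Neutrality then make every edge of T a defeat, contradicting Availability. *)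

From HB Require Import structures.
From mathcomp Require Import all_boot all_order all_algebra.
From mathcomp Require Import finmap zify ring.

Set Implicit Arguments.
Unset Strict Implicit.
Unset Printing Implicit Defensive.
Import Order.TTheory GRing.Theory Num.Theory.
Local Open Scope fset_scope.
Local Open Scope nat_scope.

(** * Ballots and profiles *)

Section Ballots.
Variables (XT : choiceType) (C : {fset XT}).
Implicit Types (r : XT -> XT -> bool) (h : XT -> nat).

Definition tied_ballot : XT -> XT -> bool := fun _ _ => false.

Definition rank_by h : XT -> XT -> bool := fun a b => [&& a \in C, b \in C & h b < h a].

Definition converse r : XT -> XT -> bool := fun a b => r b a.

Definition is_ballot r : Prop :=
  strict_weak_order C r /\ forall a b, r a b -> a \in C /\ b \in C.

Lemma is_ballot_tied : is_ballot tied_ballot.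
Proof. by []. Qed.

Lemma is_ballot_rank_by h : is_ballot (rank_by h).
Proof.
split=> [|a b /and3P[] //]; split=> [a _|a b c aC bC cC|a b c aC bC cC]; rewrite /rank_by.
- by rewrite ltnn !andbF.
- by rewrite aC bC cC /= => hab hbc; apply: ltn_trans hab.
- by rewrite aC bC cC /= -!leqNgt => hab hbc; apply: leq_trans hbc.
Qed.

Lemma is_ballot_converse r : is_ballot r -> is_ballot (converse r).
Proof.
move=> [[irr tr ntr] onC]; split=> [|a b /onC[]//].
split=> [a aC|a b c aC bC cC hba hcb|a b c aC bC cC hba hcb].
- exact: irr.
- exact: tr hcb hba.
- exact: ntr hcb hba.
Qed.

Lemma is_ballot_comp r (pi : XT -> XT) : (forall a, (pi a \in C) = (a \in C)) ->
  is_ballot r -> is_ballot (fun a b => r (pi a) (pi b)).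
Proof.
move=> piC [[irr tr ntr] onC]; split=> [|a b /onC]; last by rewrite !piC.
split=> [a aC|a b c aC bC cC|a b c aC bC cC].
- by apply: irr; rewrite piC.
- by apply: tr; rewrite piC.
- by apply: ntr; rewrite piC.
Qed.

Lemma is_ballot_asym r a b : is_ballot r -> ~~ (r a b && r b a).
Proof.
move=> [[irr tr _] onC]; apply/andP=> [[hab hba]].
have [aC bC] := onC a b hab.
by move: (irr a aC); rewrite (tr a b a aC bC aC hab hba).
Qed.

End Ballots.

Lemma is_ballot_restrict (XT : choiceType) (C D : {fset XT}) r : D `<=` C ->
  is_ballot C r -> is_ballot D (fun a b => [&& r a b, a \in D & b \in D]).
Proof.
move=> /fsubsetP sDC [[irr tr ntr] _]; split=> [|a b /and3P[] //].
split=> [a aD|a b c aD bD cD|a b c aD bD cD]; rewrite ?aD ?bD ?cD ?andbT.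
- by rewrite (negbTE (irr a (sDC a aD))).
- by apply: tr; apply: sDC.
- by apply: ntr; apply: sDC.
Qed.

Section Profiles.
Variables (VT XT : choiceType).
Implicit Types (P : profile VT XT) (B : XT -> XT -> bool).

Definition support P a b := count (fun v => ballot P v a b) (voters P).

Lemma marginE P a b : margin P a b = ((support P a b)%:Z - (support P b a)%:Z)%R.
Proof. by []. Qed.

Lemma marginN P a b : margin P b a = (- margin P a b)%R.
Proof. by rewrite !marginE opprB. Qed.

Lemma margin_id P a : margin P a a = 0%R.
Proof. by rewrite marginE subrr. Qed.

Lemma wf_profileP P :
  wf_profile P <->
  [/\ voters P != fset0, cands P != fset0,
      (forall v, v \notin voters P -> ballot P v =2 @tied_ballot XT)
    & (forall v, v \in voters P -> is_ballot (cands P) (ballot P v))].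
Proof.
split=> [[nV nC onP swo]|[nV nC offV onV]].
  split=> // [v vV a b|v vV]; last by split=> [|a b /onP[]]; [apply: swo|].
  by apply/negbTE; apply: contra vV => /onP[].
split=> // [v a b|v /onV[] //].
case: (boolP (v \in voters P)) => [vV /((onV v vV).2)[]//|/offV-> //].
Qed.

Lemma wf_ballot P v : wf_profile P -> v \in voters P -> is_ballot (cands P) (ballot P v).
Proof. by move=> /wf_profileP[_ _ _]; apply. Qed.

Lemma wf_ballot_off P v : wf_profile P -> v \notin voters P -> ballot P v =2 @tied_ballot XT.
Proof. by move=> /wf_profileP[_ _ off _]; apply: off. Qed.

Lemma margin_gt0_cands P a b : wf_profile P -> (0 < margin P a b)%R ->
  a \in cands P /\ b \in cands P.
Proof.
move=> wfP; rewrite marginE => pos.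
have /hasP[v vV vab] : has (fun v => ballot P v a b) (voters P).
  by rewrite has_count; move: pos; rewrite /support; lia.
exact: (wf_ballot wfP vV).2 _ _ vab.
Qed.

Lemma ballot_irr P v a : wf_profile P -> ballot P v a a = false.
Proof.
move=> wfP; case: (boolP (v \in voters P)) => [vV|/(wf_ballot_off wfP)-> //].
have [[irr _ _] onC] := wf_ballot wfP vV; apply/negbTE.
case: (boolP (a \in cands P)) => [aC|aNC]; first exact: irr.
by apply/negP=> /onC[aC _]; rewrite aC in aNC.
Qed.

Definition set_ballot P v B : profile VT XT :=
  Profile (v |` voters P) (cands P) (fun u => if u == v then B else ballot P u).

Lemma support_set_ballot P v B a b : wf_profile P ->
  support (set_ballot P v B) a b + ballot P v a b = support P a b + B a b.
Proof.
move=> wfP; rewrite /support /=.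
have other s : v \notin s ->
    count (fun u => (if u == v then B else ballot P u) a b) s
    = count (fun u => ballot P u a b) s.
  by move=> vNs; apply: eq_in_count => u us; case: eqP => // uv; rewrite -uv us in vNs.
case: (boolP (v \in voters P)) => vV.
  have -> : v |` voters P = voters P by apply/fsetUidPr; rewrite fsub1set.
  rewrite !(permP (perm_to_rem vV)) /= eqxx other ?mem_rem_uniqF ?fset_uniq //.
  lia.
have perm_vV : perm_eq (v |` voters P) (v :: voters P).
  apply: uniq_perm => [||u]; rewrite /= ?fset_uniq ?andbT //; last by rewrite !inE.
by rewrite (permP perm_vV) /= eqxx other // wf_ballot_off // addn0 addnC.
Qed.

Lemma support_set_ballot_fresh P v B a b : wf_profile P -> v \notin voters P ->
  support (set_ballot P v B) a b = support P a b + B a b.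
Proof. by move=> wfP vV; rewrite -(support_set_ballot v B a b wfP) wf_ballot_off // addn0. Qed.

Lemma wf_set_ballot P v B : wf_profile P -> is_ballot (cands P) B ->
  wf_profile (set_ballot P v B).
Proof.
move=> /wf_profileP[nV nC offV onV] isB; apply/wf_profileP; split=> //=.
- by apply/eqP=> /fsetP/(_ v); rewrite !inE eqxx.
- by move=> u; rewrite !inE negb_or => /andP[/negbTE-> /offV].
- by move=> u; rewrite !inE; case: eqP => // _ /onV.
Qed.

Definition relabel P (pi : XT -> XT) : profile VT XT :=
  Profile (voters P) (cands P) (fun v a b => ballot P v (pi a) (pi b)).

Lemma wf_relabel P pi : wf_profile P -> (forall a, (pi a \in cands P) = (a \in cands P)) ->
  wf_profile (relabel P pi).
Proof.
move=> /wf_profileP[nV nC offV onV] piC; apply/wf_profileP; split=> //= v.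
- by move=> /offV off a b; apply: off.
- by move=> /onV; apply: is_ballot_comp.
Qed.

Lemma support_relabel P pi a b : support (relabel P pi) a b = support P (pi a) (pi b).
Proof. by []. Qed.

Lemma margin_relabel P pi a b : margin (relabel P pi) a b = margin P (pi a) (pi b).
Proof. by []. Qed.

Definition permute_voters P (sigma : VT -> VT) : profile VT XT :=
  Profile (voters P) (cands P)
    (fun v => if v \in voters P then ballot P (sigma v) else @tied_ballot XT).

Section PermuteVoters.
Variables (P : profile VT XT) (sigma : VT -> VT).
Hypotheses (sigmaV : {in voters P, forall v, sigma v \in voters P})
  (sigma_inj : {in voters P &, injective sigma}).

Lemma wf_permute_voters : wf_profile P -> wf_profile (permute_voters P sigma).
Proof.
move=> /wf_profileP[nV nC offV onV]; apply/wf_profileP; split=> //= v.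
- by move=> /negbTE->.
- by move=> vV; rewrite vV; apply/onV/sigmaV.
Qed.

Lemma support_permute_voters a b : support (permute_voters P sigma) a b = support P a b.
Proof.
rewrite /support /= (eq_in_count (a2 := fun v => ballot P (sigma v) a b)); last first.
  by move=> v /= ->.
have uniq_map : uniq (map sigma (voters P)) by rewrite map_inj_in_uniq ?fset_uniq.
rewrite -(count_map sigma (fun v => ballot P v a b)).
apply/permP/uniq_perm; rewrite ?fset_uniq //.
apply: (uniq_min_size uniq_map _ _).2; last by rewrite size_map.
by move=> _ /mapP[v vV ->]; apply: sigmaV.
Qed.

End PermuteVoters.

Definition restrict P (D : {fset XT}) : profile VT XT :=
  Profile (voters P) D (fun v a b => [&& ballot P v a b, a \in D & b \in D]).

Lemma wf_restrict P D : wf_profile P -> D `<=` cands P -> D != fset0 ->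
  wf_profile (restrict P D).
Proof.
move=> /wf_profileP[nV nC offV onV] sDC nD; apply/wf_profileP; split=> //= v.
- by move=> /offV off a b; rewrite off.
- by move=> /onV; apply: is_ballot_restrict.
Qed.

Lemma support_restrict P D a b : a \in D -> b \in D ->
  support (restrict P D) a b = support P a b.
Proof. by move=> aD bD; apply: eq_count => v; rewrite /= aD bD !andbT. Qed.

End Profiles.

(** * Coherent IIA up to anonymity *)

Lemma perm_eq_map_injection (T U : eqType) (g1 g2 : T -> U) (s1 s2 : seq T) :
  uniq s1 -> uniq s2 -> perm_eq (map g1 s1) (map g2 s2) ->
  exists sigma : T -> T,
    [/\ {in s2, forall v, sigma v \in s1}, {in s2 &, injective sigma}
      & {in s2, forall v, g1 (sigma v) = g2 v}].
Proof.
elim: s2 s1 => [|v s2 IH] s1 uniq1; first by exists id.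
case/andP=> vNs2 uniq2 perm12.
have /mapP[u us1 g1u] : g2 v \in map g1 s1 by rewrite (perm_mem perm12) mem_head.
have perm12' : perm_eq (map g1 (rem u s1)) (map g2 s2).
  have perm_u : perm_eq (map g1 (u :: rem u s1)) (map g1 s1).
    by rewrite perm_map // perm_sym perm_to_rem.
  by rewrite -(perm_cons (g1 u)) (perm_trans perm_u) //= -g1u.
have [sigma [sigmaV sigma_inj g1sigma]] := IH _ (rem_uniq u uniq1) uniq2 perm12'.
have uNrem : u \notin rem u s1 by rewrite mem_rem_uniqF.
exists (fun w => if w == v then u else sigma w); split=> [w|w1 w2|w]; rewrite ?inE.
- by case: eqP => // _ /sigmaV /mem_rem.
- case: (eqVneq w1 v) => [-> _|_ /= w1s2]; case: (eqVneq w2 v) => [-> _ //|_ /= w2s2] e.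
  + by move: (sigmaV _ w2s2); rewrite -e (negbTE uNrem).
  + by move: (sigmaV _ w1s2); rewrite e (negbTE uNrem).
  + exact: sigma_inj.
- by case: eqP => [-> //|_ /g1sigma].
Qed.

Lemma count_bool_pairs (s : seq (bool * bool)) : {in s, forall q, ~~ (q.1 && q.2)} ->
  [/\ count_mem (true, true) s = 0, count_mem (true, false) s = count fst s,
      count_mem (false, true) s = count snd s
    & count_mem (false, false) s + count fst s + count snd s = size s].
Proof.
elim: s => [|q s IH] disj //=.
have [IH1 IH2 IH3 IH4] := IH (fun r rs => disj r (mem_behead (rs : r \in behead (q :: s)))).
move: (disj q (mem_head q s)); clear IH disj.
by case: q => [[] []] //= _; rewrite IH1 IH2 IH3 -IH4; split; ring.
Qed.

Lemma perm_eq_bool_pairs (s t : seq (bool * bool)) :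
  {in s, forall q, ~~ (q.1 && q.2)} -> {in t, forall q, ~~ (q.1 && q.2)} ->
  size s = size t -> count fst s = count fst t -> count snd s = count snd t ->
  perm_eq s t.
Proof.
move=> /count_bool_pairs[s1 s2 s3 s4] /count_bool_pairs[t1 t2 t3 t4] st st1 st2.
apply/allP=> [[[] []]] _; apply/eqP; rewrite ?s1 ?t1 ?s2 ?t2 ?s3 ?t3 //.
by apply: (@addIn (count fst t + count snd t)); rewrite !addnA t4 -st1 -st2 s4.
Qed.

Lemma match_voters (VT XT : choiceType) (Q R : profile VT XT) x y :
  wf_profile Q -> wf_profile R -> voters R = voters Q ->
  support R x y = support Q x y -> support R y x = support Q y x ->
  exists sigma : VT -> VT,
    [/\ {in voters Q, forall v, sigma v \in voters Q}, {in voters Q &, injective sigma}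
      & {in voters Q, forall v,
           ballot Q (sigma v) x y = ballot R v x y /\ ballot Q (sigma v) y x = ballot R v y x}].
Proof.
move=> wfQ wfR eRQ sxy syx.
pose g (P : profile VT XT) v := (ballot P v x y, ballot P v y x).
have disj P : wf_profile P -> {in map (g P) (voters P), forall q, ~~ (q.1 && q.2)}.
  by move=> wfP _ /mapP[v vV ->]; apply/is_ballot_asym/(wf_ballot wfP vV).
have perm_QR : perm_eq (map (g Q) (voters Q)) (map (g R) (voters Q)).
  move: sxy syx; rewrite /support eRQ => sxy syx.
  apply: perm_eq_bool_pairs; rewrite ?size_map ?count_map //.
  - exact: disj.
  - by rewrite -eRQ; apply: disj.
have [sigma [sigmaV sigma_inj gsigma]] :=
  perm_eq_map_injection (fset_uniq _) (fset_uniq _) perm_QR.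
by exists sigma; split=> // v /gsigma [-> ->].
Qed.

Section CoherenceUpToAnonymity.
Variables (VT XT : choiceType) (f : vccr VT XT).
Hypotheses (f_anon : anonymity f) (f_ciia : coherent_iia f).

Lemma coherent_iia_anonymous (Q R : profile VT XT) x y :
  wf_profile Q -> wf_profile R -> voters R = voters Q -> cands R `<=` cands Q ->
  x \in cands R -> y \in cands R ->
  support R x y = support Q x y -> support R y x = support Q y x ->
  (forall a b, a \in cands R -> b \in cands R -> (0 < margin R a b)%R ->
     (margin R a b <= margin Q a b)%R) ->
  f Q x y -> f R x y.
Proof.
move=> wfQ wfR eRQ sRQ xR yR sxy syx reduce fQ.
have [sigma [sigmaV sigma_inj sigma_xy]] := match_voters wfQ wfR eRQ sxy syx.
set Q' := permute_voters Q sigma.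
have wfQ' : wf_profile Q' by apply: wf_permute_voters.
have mQ' a b : margin Q' a b = margin Q a b.
  by rewrite !marginE !support_permute_voters.
have fQ' : f Q' x y.
  by apply/(f_anon wfQ wfQ' _ _ sigmaV sigma_inj) => // v vV a b; rewrite /= vV.
have xQ : x \in cands Q by apply: (fsubsetP sRQ).
have yQ : y \in cands Q by apply: (fsubsetP sRQ).
apply: (f_ciia wfQ' wfR fQ'); split=> //.
- apply/fsetP=> a; rewrite !inE.
  by case: (boolP ((a == x) || (a == y))) => [/orP[]/eqP->|]; rewrite ?andbF ?andbT /= ?xR ?yR.
- have in_xy a : a \in [fset x; y] -> a = x \/ a = y by rewrite !inE => /orP[]/eqP; tauto.
  move=> v a b vV /fsetIP[_ /in_xy[]->] /fsetIP[_ /in_xy[]->]; rewrite /= vV ?ballot_irr //;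
    by have [e1 e2] := sigma_xy v vV; rewrite ?e1 ?e2.
- by rewrite mQ' !marginE sxy syx.
- by move=> a b aR bR pos; rewrite mQ'; apply: reduce.
Qed.

End CoherenceUpToAnonymity.

(** * Defeats have positive margins *)

Section Swap.
Variables (XT : eqType) (x y : XT).

Definition swap a := if a == x then y else if a == y then x else a.

Lemma swap_l : swap x = y.
Proof. by rewrite /swap eqxx. Qed.

Lemma swap_r : swap y = x.
Proof. by rewrite /swap eqxx; case: eqP. Qed.

Lemma swapK : involutive swap.
Proof.
move=> a; rewrite /swap; case: (eqVneq a x) => [->|ax]; first by rewrite eqxx; case: eqP.
by case: (eqVneq a y) => [->|ay]; rewrite ?eqxx // (negbTE ax) (negbTE ay).
Qed.

Lemma mem_swap (C : pred XT) a : x \in C -> y \in C -> (swap a \in C) = (a \in C).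
Proof.
move=> xC yC; rewrite /swap.
by case: (eqVneq a x) => [->|_]; [|case: (eqVneq a y) => [->|_]]; rewrite ?xC ?yC.
Qed.

End Swap.

Section MajorityDefeat.
Variables (VT XT : choiceType) (f : vccr VT XT).
Hypotheses (f_vccr : is_vccr f) (f_anon : anonymity f) (f_neutral : neutrality f)
  (f_mono : monotonicity_two f) (f_ciia : coherent_iia f).
Implicit Types (P R : profile VT XT).

Lemma tie_no_defeat R x y : wf_profile R -> cands R = [fset x; y] ->
  margin R x y = 0%R -> ~ f R x y.
Proof.
move=> wfR candsR m0 fR; have [xR yR nfyx] := f_vccr wfR fR; apply: nfyx.
pose Rs := relabel R (swap x y).
have swapC a : (swap x y a \in cands R) = (a \in cands R) by apply: mem_swap.
have wfRs : wf_profile Rs by apply: wf_relabel.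
have fRs : f Rs y x.
  rewrite -[y in f _ y](swap_l x y) -[x in f _ _ x](swap_r x y).
  apply/(f_neutral wfR wfRs) => //.
  - by move=> a; rewrite swapC.
  - by move=> a b _ _; apply: (can_inj (swapK x y)).
  - by move=> v a b _ _ _; rewrite /= !swapK.
have s0 : support R y x = support R x y by move: m0; rewrite marginE; lia.
apply: (coherent_iia_anonymous f_anon f_ciia wfRs wfR) fRs;
  rewrite ?support_relabel ?swap_l ?swap_r //.
move=> a b; rewrite candsR !inE => /orP[]/eqP-> /orP[]/eqP->;
  by rewrite ?margin_id ?m0 ?ltxx // marginN m0 oppr0 ltxx.
Qed.

Lemma neg_margin_no_defeat R x y n : wf_profile R -> cands R = [fset x; y] -> x != y ->
  margin R x y = (- n%:Z)%R -> ~ f R x y.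
Proof.
elim: n R => [|n IH] R wfR candsR xy mR fR; first by apply: (tie_no_defeat wfR candsR).
have /hasP[v vV vyx] : has (fun v => ballot R v y x) (voters R).
  by rewrite has_count; move: mR; rewrite marginE /support; lia.
have xR : x \in cands R by rewrite candsR !inE eqxx.
have yR : y \in cands R by rewrite candsR !inE eqxx orbT.
have vxy : ballot R v x y = false.
  by apply/negbTE; move: (is_ballot_asym x y (wf_ballot wfR vV)); rewrite vyx andbT.
(* Blanking v's ballot raises x one place in it and the margin of x over y by one. *)
pose R' := set_ballot R v (@tied_ballot XT).
have wfR' : wf_profile R' by apply: wf_set_ballot.
have VR' : voters R' = voters R by apply/fsetUidPr; rewrite fsub1set.
apply: (IH R' wfR') => //.
  have := support_set_ballot v (@tied_ballot XT) x y wfR.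
  have := support_set_ballot v (@tied_ballot XT) y x wfR.
  by move: mR; rewrite /R' !marginE vxy vyx /tied_ballot addn0 addn1 => mR sy sx; lia.
have other a : a \in cands R -> a != x -> a = y.
  by rewrite candsR !inE => /orP[]/eqP-> //; rewrite eqxx.
apply: (f_mono wfR wfR' _ VR' _ vV) fR.
- by rewrite candsR cardfs2 xy.
- by [].
- by move=> u _ /negbTE; rewrite /= => ->.
rewrite /R' /= eqxx; split=> //; first by exists y.
  by move=> a b aR bR ax bx; rewrite (other a aR ax) (other b bR bx) ballot_irr.
exists y; split=> //; first by rewrite yR eq_sym xy vxy.
- by move=> z zR zx; rewrite (other z zR zx) ballot_irr.
- by rewrite /tied vyx andbF.
Qed.

Lemma defeat_margin_gt0 P x y : wf_profile P -> f P x y -> (0 < margin P x y)%R.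
Proof.
move=> wfP fP; have [xP yP nfyx] := f_vccr wfP fP.
have xy : x != y by apply/eqP=> exy; rewrite exy in fP nfyx; exact: nfyx fP.
set D := [fset x; y].
have xD : x \in D by rewrite !inE eqxx.
have yD : y \in D by rewrite !inE eqxx orbT.
have sDP : D `<=` cands P by apply/fsubsetP=> a; rewrite !inE => /orP[]/eqP->.
have wfR : wf_profile (restrict P D).
  by apply: wf_restrict => //; apply/eqP=> /fsetP/(_ x); rewrite xD inE.
have mR a b : a \in D -> b \in D -> margin (restrict P D) a b = margin P a b.
  by move=> aD bD; rewrite !marginE !support_restrict.
have fR : f (restrict P D) x y.
  apply: (f_ciia wfP wfR fP); split=> //=.
  - apply/fsetP=> a; rewrite !in_fsetI andbb.
    by case: (boolP (a \in D)) => aD; rewrite ?andbF ?andbT // (fsubsetP sDP).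
  - by move=> v a b _ /fsetIP[_ ->] /fsetIP[_ ->]; rewrite !andbT.
  - exact: mR.
  - by move=> a b aD bD _; rewrite mR.
rewrite -mR // ltNge; apply/negP=> le0.
apply: (neg_margin_no_defeat (n := `|margin (restrict P D) x y|%N) wfR) fR => //.
lia.
Qed.

End MajorityDefeat.

(** * Padding a profile *)

Section Padding.
Variables (VT XT : choiceType) (f : vccr VT XT) (x y : XT).
Hypotheses (VT_infinite : forall s : {fset VT}, exists v, v \notin s)
  (f_indiff : neutral_indifference f) (f_rev : neutral_reversal f).
Implicit Types (P Q R : profile VT XT).

Definition padding P Q d : Prop :=
  [/\ wf_profile Q, cands Q = cands P, margin Q =2 margin P,
      support Q x y = support P x y + d /\ support Q y x = support P y x + d
    & (f P x y -> f Q x y)].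

Lemma padding_refl P : wf_profile P -> padding P P 0.
Proof. by move=> wfP; split; rewrite ?addn0. Qed.

Lemma padding_trans P Q R d e : padding P Q d -> padding Q R e -> padding P R (d + e).
Proof.
move=> [_ cQ mQ [xyQ yxQ] fQ] [wfR cR mR [xyR yxR] fR]; split=> //.
- by rewrite cR.
- by move=> a b; rewrite mR.
- by rewrite xyR xyQ yxR yxQ !addnA.
- by move=> /fQ /fR.
Qed.

Lemma pad_blanks P n : wf_profile P ->
  exists2 Q, padding P Q 0 & #|` voters P| + n <= #|` voters Q|.
Proof.
elim: n P => [|n IH] P wfP; first by exists P; [apply: padding_refl | rewrite addn0].
have [v vV] := VT_infinite (voters P).
set P1 := set_ballot P v (@tied_ballot XT).
have wfP1 : wf_profile P1 by apply: wf_set_ballot.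
have sP1 a b : support P1 a b = support P a b.
  by rewrite support_set_ballot_fresh // addn0.
have padP1 : padding P P1 0.
  split=> //; rewrite ?sP1 ?addn0 //; first by move=> a b; rewrite !marginE !sP1.
  apply: (f_indiff wfP wfP1 vV erefl erefl _ _ x y).2 => [u uV a b|a b]; rewrite /= ?eqxx //.
  by case: eqP => // euv; rewrite -euv uV in vV.
have [Q padQ sizeQ] := IH P1 wfP1.
exists Q; first exact: padding_trans padP1 padQ.
by move: sizeQ; rewrite /= cardfsU1 vV; lia.
Qed.

Lemma pad_reversals P n : wf_profile P -> x \in cands P -> y \in cands P -> x != y ->
  exists Q, padding P Q n.
Proof.
elim: n P => [|n IH] P wfP xP yP xy; first by exists P; apply: padding_refl.
have [v2 v2V] := VT_infinite (voters P).
have [v1 v1V] := VT_infinite (v2 |` voters P).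
have v12 : v1 != v2 by apply: contraNneq v1V => ->; rewrite fset1U1.
have v1V' : v1 \notin voters P by apply: contra v1V; apply: fset1Ur.
set B := rank_by (cands P) (fun u => u == x).
have isB : is_ballot (cands P) B by apply: is_ballot_rank_by.
set P2 := set_ballot P v2 (converse B).
have wfP2 : wf_profile P2 by apply/wf_set_ballot/is_ballot_converse.
set P1 := set_ballot P2 v1 B.
have wfP1 : wf_profile P1 by apply: wf_set_ballot.
have sP1 a b : support P1 a b = support P a b + (B a b + B b a).
  by rewrite !support_set_ballot_fresh // addnAC addnA.
have Bxy : B x y by rewrite /B /rank_by xP yP eqxx eq_sym (negbTE xy).
have Byx : B y x = false by rewrite /B /rank_by eqxx ltnNge leq_b1 !andbF.
have padP1 : padding P P1 1.
  split=> //.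
  - by move=> a b; rewrite !marginE !sP1; lia.
  - by rewrite !sP1 Bxy Byx.
  apply: (f_rev wfP wfP1 v12 v1V' v2V erefl erefl _ _ x y).2 => [u uV a b|a b]; rewrite /= ?eqxx.
    case: eqP => [euv|_]; first by rewrite -euv uV in v1V'.
    by case: eqP => // euv; rewrite -euv uV in v2V.
  by rewrite eq_sym (negbTE v12).
have [Q padQ] := IH P1 wfP1 xP yP xy.
by exists Q; apply: padding_trans padP1 padQ.
Qed.

End Padding.

(** * The cycle profile *)

Section NextOnCycle.
Variables (T : eqType) (cs : seq T).
Hypothesis cs_uniq : uniq cs.

Lemma next_inj : injective (next cs).
Proof. exact: can_inj (prev_next cs_uniq). Qed.

Lemma next_neq a : 2 < size cs -> a \in cs ->
  next cs a != a /\ next cs (next cs a) != a.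
Proof.
move=> cs_size /rot_to[i s rot_cs].
have : uniq (a :: s) by rewrite -rot_cs rot_uniq.
move: cs_size; rewrite -(size_rot i) -!(next_rot i cs_uniq) {}rot_cs.
case: s => [|b [|c s]] // _; rewrite /= !inE !negb_or eqxx.
move=> /and4P[/and3P[ab ac _] _ _ _].
by rewrite eq_sym in ab; rewrite (negbTE ab) eqxx eq_sym.
Qed.

Lemma iter_next_mem i a : (iter i (next cs) a \in cs) = (a \in cs).
Proof. by elim: i => //= i <-; rewrite mem_next. Qed.

Lemma iter_next_inj i : injective (iter i (next cs)).
Proof. by elim: i => // i IH a b /= /next_inj /IH. Qed.

Lemma iter_nextC i a : iter i (next cs) (next cs a) = next cs (iter i (next cs) a).
Proof. by rewrite -iterSr. Qed.

End NextOnCycle.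

Lemma next_last (T : eqType) (y : T) (s : seq T) : uniq (y :: s) -> next (y :: s) (last y s) = y.
Proof.
by move=> cs_uniq; rewrite next_nth mem_last index_last // nth_default.
Qed.

Lemma mem_iter_next (T : eqType) (y : T) (s : seq T) a : uniq (y :: s) -> a \in y :: s ->
  exists i, a = iter i (next (y :: s)) y.
Proof.
move=> cs_uniq; rewrite -mem_rcons.
have /fpathE -> : fpath (next (y :: s)) y (rcons s y) by apply: (cycle_next cs_uniq).
by move=> /trajectP[i _ ->]; exists i.+1; rewrite iterSr.
Qed.

Lemma count_nth_index (T : eqType) (U : Type) (W : seq T) (ks : seq U) k0 (F : pred U) :
  uniq W -> size ks = size W -> count (fun v => F (nth k0 ks (index v W))) W = count F ks.
Proof.
elim: W ks => [|w W IH] [|k ks] //= /andP[wW uW] [eq_size].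
rewrite eqxx -(IH ks) //; congr (_ + _); apply: eq_in_count => v vW /=.
by case: eqP => // ewv; rewrite ewv vW in wW.
Qed.

Lemma sum_bool_count (T : Type) (s : seq T) (P : pred T) : \sum_(c <- s) (P c : nat) = count P s.
Proof. by rewrite -sumn_count sumnE big_map. Qed.

Section CycleBallots.
Variables (XT : choiceType) (cs : seq XT).
Local Notation nx := (next cs).
Local Notation C := [fset a in cs].

Lemma in_cycle a : (a \in C) = (a \in cs).
Proof. by rewrite inE. Qed.

(* Together, [lead c] (c > next c > rest) and [trail c] (rest > c ~ next c)
   give c a net majority of one over [next c] and leave all other margins 0. *)
Definition lead c := rank_by C (fun u => (u == c).*2 + (u == nx c)).
Definition trail c := rank_by C (fun u => ~~ ((u == c) || (u == nx c))).
Definition chain := rank_by C (index^~ cs).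

Inductive cycle_code := Lead of XT | Trail of XT | Chain | RevChain | Blank.

Definition decode d : XT -> XT -> bool :=
  match d with
  | Lead c => lead c
  | Trail c => trail c
  | Chain => chain
  | RevChain => converse chain
  | Blank => @tied_ballot XT
  end.

Lemma is_ballot_decode d : is_ballot C (decode d).
Proof.
case: d => [c|c|||] /=; try exact: is_ballot_rank_by.
- exact/is_ballot_converse/is_ballot_rank_by.
- exact: is_ballot_tied.
Qed.

(* The [p] copies of [chain] and of its converse raise every support by [p]
   without changing margins; the [u] blank ballots adjust the number of voters. *)
Definition cycle_codes m p u : seq cycle_code :=
  flatten [seq nseq m (Lead c) ++ nseq m (Trail c) | c <- cs]
  ++ nseq p Chain ++ nseq p RevChain ++ nseq u Blank.

Lemma size_cycle_codes m p u : size (cycle_codes m p u) = 2 * m * size cs + 2 * p + u.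
Proof.
rewrite !size_cat !size_nseq size_flatten /shape -map_comp sumnE big_map.
rewrite (eq_bigr (fun=> 2 * m)) => [|c _]; last by rewrite /= size_cat !size_nseq; lia.
by rewrite big_const_seq count_predT iter_addn_0; lia.
Qed.

Lemma count_cycle_codes m p u a b :
  count (fun d => decode d a b) (cycle_codes m p u)
  = m * \sum_(c <- cs) (lead c a b + trail c a b) + p * (chain a b + chain b a).
Proof.
rewrite !count_cat !count_nseq count_flatten -map_comp sumnE big_map big_distrr /=.
rewrite (eq_bigr (fun c => m * (lead c a b + trail c a b))) => [|c _]; last first.
  by rewrite /= count_cat !count_nseq /=; lia.
by rewrite /tied_ballot /converse mul0n addn0 mulnDr ![p * _]mulnC.
Qed.

Hypotheses (cs_uniq : uniq cs) (cs_size : 2 < size cs).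

Lemma edge_block_balance c a b : c \in cs ->
  lead c a b + trail c a b + ((b == c) && (a == nx c))
  = lead c b a + trail c b a + ((a == c) && (b == nx c)).
Proof.
move=> cs_c; have [nc _] := next_neq cs_uniq cs_size cs_c.
have off u : u \notin cs -> (u == c) = false /\ (u == nx c) = false.
  by move=> uNcs; split; apply: contraNF uNcs => /eqP->; rewrite ?mem_next.
rewrite /lead /trail /rank_by !in_cycle.
case: (boolP (a \in cs)) => [a_cs|/off[-> ->]]; last by rewrite !andbF.
case: (boolP (b \in cs)) => [b_cs|/off[-> ->]]; last by rewrite !andbF.
have not_both u : ~~ ((u == c) && (u == nx c)).
  by apply/andP=> [[/eqP-> /eqP e]]; rewrite -e eqxx in nc.
move: (not_both a) (not_both b) => /=.
by case: (a == c); case: (a == nx c); case: (b == c); case: (b == nx c).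
Qed.

Lemma edge_block_back c a : c \in cs -> a \in cs ->
  lead c (nx a) a + trail c (nx a) a = (c == nx a) + (nx c == a).
Proof.
move=> cs_c cs_a; have [nc nnc] := next_neq cs_uniq cs_size cs_c.
rewrite /lead /trail /rank_by !in_cycle mem_next cs_a (inj_eq (next_inj cs_uniq)) /=.
rewrite [c == _]eq_sym [nx c == _]eq_sym.
have h1 : ~~ ((a == c) && (a == nx c)).
  by apply/andP=> [[/eqP-> /eqP e]]; rewrite -e eqxx in nc.
have h2 : ~~ ((a == c) && (nx a == c)).
  by apply/andP=> [[/eqP-> /eqP e]]; rewrite e eqxx in nc.
have h3 : ~~ ((a == nx c) && (nx a == c)).
  by apply/andP=> [[/eqP-> /eqP e]]; rewrite e eqxx in nnc.
move: h1 h2 h3.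
by case: (a == c); case: (a == nx c); case: (nx a == c).
Qed.

Lemma chain_total a b : a \in cs -> b \in cs -> a != b -> chain a b + chain b a = 1.
Proof.
move=> cs_a cs_b ab; rewrite /chain /rank_by !in_cycle cs_a cs_b /=.
have : index a cs != index b cs by apply: contra ab => /eqP/index_inj-> //.
by case: ltngtP.
Qed.

Lemma count_cycle_edge a b :
  count (fun c => (a == c) && (b == nx c)) cs = (a \in cs) && (b == nx a).
Proof.
case: (eqVneq b (nx a)) => [->|nb]; rewrite ?andbT ?andbF.
  rewrite -(count_uniq_mem a cs_uniq); apply: eq_count => c /=.
  by rewrite (inj_eq (next_inj cs_uniq)) andbb eq_sym.
rewrite (eq_count (a2 := pred0)) ?count_pred0 // => c /=.
by case: eqP => // <-; apply/negbTE.
Qed.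

End CycleBallots.

Section CycleProfile.
Variables (VT XT : choiceType) (cs : seq XT) (W : {fset VT}) (m p : nat).
Hypotheses (cs_uniq : uniq cs) (cs_size : 2 < size cs)
  (W_nonempty : W != fset0) (W_large : 2 * m * size cs + 2 * p <= #|` W|).
Local Notation nx := (next cs).
Local Notation codes := (cycle_codes cs m p (#|` W| - (2 * m * size cs + 2 * p))).

Definition cycle_profile : profile VT XT :=
  Profile W [fset a in cs] (fun v => decode cs (nth (Blank XT) codes (index v W))).
Local Notation T := cycle_profile.

Lemma size_cycle_profile_codes : size codes = #|` W|.
Proof. by rewrite size_cycle_codes; lia. Qed.

Lemma wf_cycle_profile : wf_profile T.
Proof.
apply/wf_profileP; split=> // [|v vNW a b|v _]; last exact: is_ballot_decode.
- move: cs_size; case E: cs => [|c s] // _.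
  by apply/eqP=> /fsetP/(_ c); rewrite !inE E mem_head.
- by rewrite /= memNindex // nth_default // size_cycle_profile_codes.
Qed.

Lemma support_cycle_profile a b :
  support T a b = m * \sum_(c <- cs) (lead cs c a b + trail cs c a b)
                  + p * (chain cs a b + chain cs b a).
Proof.
rewrite -(count_cycle_codes _ _ _ (#|` W| - (2 * m * size cs + 2 * p))).
rewrite -(count_nth_index (Blank XT) _ (fset_uniq W)) //.
exact: size_cycle_profile_codes.
Qed.

Lemma margin_cycle_profile a b :
  margin T a b = ((m * ((a \in cs) && (b == nx a)))%:Z
                  - (m * ((b \in cs) && (a == nx b)))%:Z)%R.
Proof.
have balance : \sum_(c <- cs) (lead cs c a b + trail cs c a b) + ((b \in cs) && (a == nx b))
             = \sum_(c <- cs) (lead cs c b a + trail cs c b a) + ((a \in cs) && (b == nx a)).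
  rewrite -!(count_cycle_edge cs_uniq) -!sum_bool_count -!big_split.
  by apply: eq_big_seq => c /(edge_block_balance cs_uniq cs_size).
have := congr1 (muln m) balance; rewrite !mulnDr.
by rewrite marginE !support_cycle_profile [chain _ b a + _]addnC; lia.
Qed.

Lemma margin_cycle_profile_gt0 a b : (0 < margin T a b)%R ->
  [/\ a \in cs, b = nx a & margin T a b = (m%:Z)%R].
Proof.
rewrite margin_cycle_profile.
case: (boolP (a \in cs)) => [cs_a|]; last by rewrite /= muln0; lia.
case: (eqVneq b (nx a)) => [->|]; last by rewrite /= muln0; lia.
have [_ nna] := next_neq cs_uniq cs_size cs_a.
by rewrite eq_sym (negbTE nna) andbF muln0 muln1 subr0.
Qed.

Lemma support_cycle_profile_edge a : a \in cs ->
  support T a (nx a) = 3 * m + p /\ support T (nx a) a = 2 * m + p.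
Proof.
move=> cs_a; have [na _] := next_neq cs_uniq cs_size cs_a.
have back : support T (nx a) a = 2 * m + p.
  rewrite support_cycle_profile chain_total ?mem_next //.
  rewrite (eq_big_seq _ (fun c cs_c => edge_block_back cs_uniq cs_size cs_c cs_a)).
  have count_prev : count (fun c => nx c == a) cs = 1.
    transitivity (count_mem (prev cs a) cs); last by rewrite count_uniq_mem // mem_prev cs_a.
    by apply: eq_count => c; apply: (can2_eq (prev_next cs_uniq) (next_prev cs_uniq)).
  rewrite big_split /= !sum_bool_count count_prev count_uniq_mem ?mem_next // cs_a.
  lia.
split=> //; have := margin_cycle_profile a (nx a).
rewrite marginE back cs_a eqxx mem_next cs_a /=.
have [_ nna] := next_neq cs_uniq cs_size cs_a.
by rewrite eq_sym (negbTE nna); lia.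
Qed.

End CycleProfile.

Section StrongCycle.
Variables (VT XT : choiceType) (f : vccr VT XT).
Hypotheses (f_anon : anonymity f) (f_neutral : neutrality f) (f_avail : availability f)
  (f_ciia : coherent_iia f).

Lemma no_defeat_on_strong_cycle (Q : profile VT XT) x y s m p :
  wf_profile Q -> f Q x y -> uniq (y :: s) -> last y s = x -> 2 < size (y :: s) ->
  {subset y :: s <= cands Q} ->
  (forall a, a \in y :: s -> (m%:Z <= margin Q a (next (y :: s) a))%R) ->
  support Q x y = 3 * m + p -> support Q y x = 2 * m + p ->
  2 * m * size (y :: s) + 2 * p <= #|` voters Q| -> False.
Proof.
set cs := y :: s => wfQ fQ cs_uniq last_x cs_size csQ strong sxy syx large.
have nx_x : next cs x = y by rewrite -last_x next_last.
have cs_x : x \in cs by rewrite -last_x mem_last.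
have cs_y : y \in cs by rewrite mem_head.
have nonempty : voters Q != fset0 by case/wf_profileP: wfQ.
set T := cycle_profile cs (voters Q) m p.
have wfT : wf_profile T by apply: wf_cycle_profile.
have edge a : a \in cs -> f T (prev cs a) a.
  (* The rotation [pi] maps the edge (x, y) to (prev a, a), and [T] relabelled
     by [pi] looks like [Q] on {x, y}. *)
  move=> /(mem_iter_next cs_uniq)[i ->]; set pi := iter i (next cs).
  have piT b : (pi b \in cands T) = (b \in cands T) by rewrite !in_cycle iter_next_mem.
  have pi_y : pi y = next cs (pi x) by rewrite /pi -nx_x iter_nextC.
  have wfTpi : wf_profile (relabel T pi) by apply: wf_relabel.
  have xT : x \in cands T by rewrite in_cycle.
  have yT : y \in cands T by rewrite in_cycle.
  have fTpi : f (relabel T pi) x y.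
    have [exy eyx] : support T (pi x) (pi y) = 3 * m + p /\ support T (pi y) (pi x) = 2 * m + p.
      by rewrite pi_y; apply: support_cycle_profile_edge; rewrite ?iter_next_mem.
    apply: (coherent_iia_anonymous f_anon f_ciia wfQ wfTpi) fQ;
      rewrite ?support_relabel ?exy ?eyx //.
    - by apply/fsubsetP=> b; rewrite in_cycle; apply: csQ.
    move=> b c _ _; rewrite margin_relabel.
    move=> /(margin_cycle_profile_gt0 cs_uniq cs_size nonempty large) [cs_b pi_c ->].
    rewrite -iter_nextC in pi_c; rewrite (iter_next_inj cs_uniq pi_c).
    by apply: strong; rewrite -(iter_next_mem cs i).
  have -> : prev cs (pi y) = pi x by rewrite pi_y prev_next.
  have piC b : b \in cands (relabel T pi) -> pi b \in cands (relabel T pi) by rewrite /= piT.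
  have pi_inj : {in cands (relabel T pi) &, injective pi}.
    by move=> b c _ _; apply: iter_next_inj.
  exact: (f_neutral wfTpi wfT erefl erefl piC pi_inj (fun _ _ _ _ _ _ => erefl) xT yT).1 fTpi.
have [z zT zundefeated] := f_avail wfT.
by apply: zundefeated (prev cs z) (edge z _); rewrite -in_cycle.
Qed.

End StrongCycle.

(** * Defeats beat every majority cycle *)

Lemma strength_path (VT XT : choiceType) (P : profile VT XT) a s k : s != [::] ->
  (k <= strength P a s)%R -> path (fun u w => k <= margin P u w)%R a s.
Proof.
elim: s a => [//|b s IH] a _ /=.
case: s IH => [|c s] IH /=; first by move=> ->.
by rewrite le_min => /andP[-> /IH]; apply.
Qed.

Section SplitCycle.
Variables (VT XT : choiceType) (f : vccr VT XT).
Hypotheses (VT_infinite : forall s : {fset VT}, exists v, v \notin s)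
  (f_vccr : is_vccr f) (f_anon : anonymity f) (f_neutral : neutrality f)
  (f_avail : availability f) (f_indiff : neutral_indifference f)
  (f_mono : monotonicity_two f) (f_rev : neutral_reversal f) (f_ciia : coherent_iia f).

Lemma defeat_margin_gt_strength (P : profile VT XT) x y s : wf_profile P -> f P x y ->
  majority_path P y s x -> (strength P y s < margin P x y)%R.
Proof.
move=> wfP fP [s_nil last_x cs_uniq s_path]; rewrite ltNge; apply/negP=> weak.
have m_gt0 := defeat_margin_gt0 f_vccr f_anon f_neutral f_mono f_ciia wfP fP.
have cs_size : 2 < size (y :: s).
  case: s s_nil last_x s_path {weak cs_uniq} => [|b [|c s]] //= _ bx; rewrite andbT => yb.
  by move: m_gt0; rewrite -bx marginN oppr_gt0 ltNge (ltW yb).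
set cs := y :: s.
have [xP yP _] := f_vccr wfP fP.
set m := `|margin P x y|%N.
have mE : margin P x y = (m%:Z)%R by rewrite /m gez0_abs ?ltW.
have cs_cycle : cycle (fun u w => m%:Z <= margin P u w)%R cs.
  by rewrite /= rcons_path -mE strength_path //= last_x lexx.
have strong a : a \in cs -> (m%:Z <= margin P a (next cs a))%R := next_cycle cs_cycle.
have csP : {subset cs <= cands P}.
  move=> a /strong; rewrite -mE => m_le.
  by have [] := margin_gt0_cands wfP (lt_le_trans m_gt0 m_le).
have xy : x != y by apply: contraTneq m_gt0 => ->; rewrite marginE subrr ltxx.
(* Pad P until the supports of (x, y) and (y, x) are 3m + p and 2m + p, where
   p = support P x y, as for every edge of the cycle profile. *)
have [Q1 padQ1] := pad_reversals VT_infinite f_rev (3 * m) wfP xP yP xy.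
have [wfQ1 _ _ _ _] := padQ1.
have [Q padQ largeQ] := pad_blanks x y VT_infinite f_indiff
  (2 * m * size cs + 2 * support P x y) wfQ1.
have [wfQ cQ mQ [sxy syx] fQ] := padding_trans padQ1 padQ.
have sP : support P x y = support P y x + m by move: mE; rewrite marginE; lia.
apply: (no_defeat_on_strong_cycle f_anon f_neutral f_avail f_ciia wfQ (fQ fP) cs_uniq last_x
  cs_size _ _ _ _ _ (m := m) (p := support P x y)) => //.
- by move=> a /csP; rewrite cQ.
- by move=> a /strong; rewrite mQ.
- by rewrite sxy; lia.
- by rewrite syx; lia.
- exact: leq_trans (leq_addl _ _) largeQ.
Qed.

End SplitCycle.

Unset Implicit Arguments.

Theorem theorem7p4 (VT XT : choiceType)
  (VT_infinite : forall s : {fset VT}, exists v, v \notin s)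
  (XT_infinite : forall s : {fset XT}, exists x, x \notin s)
  (f : vccr VT XT) :
  is_vccr f -> anonymity f -> neutrality f -> availability f ->
  neutral_indifference f -> monotonicity_two f -> neutral_reversal f ->
  coherent_iia f ->
  forall P : profile VT XT, wf_profile P ->
  forall x y : XT, f P x y -> sc P x y.
Proof.
move=> f_vccr f_anon f_neutral f_avail f_indiff f_mono f_rev f_ciia P wfP x y fP.
split; first exact: (defeat_margin_gt0 f_vccr f_anon f_neutral f_mono f_ciia wfP fP).
by move=> s; apply: (defeat_margin_gt_strength VT_infinite f_vccr f_anon f_neutral f_avail f_indiff
  f_mono f_rev f_ciia wfP fP).
Qed.
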